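(* Let $i,j\geq 1$ be integers. For $n\geq 0$, let $U(i,j,n)$ be the set of all triples $(L_1,L_2,L_3)$ of walks of length $n$ with steps $(1,1)$ and $(1,-1)$, where $L_1$ starts at $(0,0)$, $L_2$ starts at $(0,2i)$ and $L_3$ starts at $(0,2i+2j)$. Let $V(i,j,n)$ be the set of triples in $U(i,j,n)$ whose three walks are pairwise nonintersecting, and for $\{a,b\}\in\{\{1,2\},\{2,3\},\{1,3\}\}$ let $M_{ab}(n)$ be the set of triples in $U(i,j,n)$ such that $L_a$ intersects $L_b$. Define $V_{i,j}(t)=\sum_{n\geq 0}|V(i,j,n)|t^n$, $U_{i,j}(t)=\sum_{n\geq 0}|U(i,j,n)|t^n$ and $M_{ab}(t)=\sum_{n\geq0}|M_{ab}(n)|t^n$. Then $$V_{i,j}(t)=U_{i,j}(t)+M_{13}(t)-M_{12}(t)-M_{23}(t).$$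
   Context: Two walks intersect if they share a common lattice point; otherwise they are nonintersecting. *)

From mathcomp Require Import all_boot all_order all_algebra.
Set Implicit Arguments. Unset Strict Implicit. Unset Printing Implicit Defensive.
Import GRing.Theory Num.Theory.
Local Open Scope ring_scope.

(* A walk of length n with steps (1,1) (true) and (1,-1) (false),
   encoded by its sequence of n steps. *)
Definition walk (n : nat) := n.-tuple bool.

Definition step (b : bool) : int := if b then 1 else -1.

Definition height (y0 : int) (w : seq bool) (k : nat) : int :=
  y0 + \sum_(s <- take k w) step s.

Definition lattice_points (n : nat) (y0 : int) (w : walk n) : seq (nat * int) :=
  [seq (k, height y0 w k) | k <- iota 0 n.+1].

Definition intersect (n : nat) (y1 y2 : int) (w1 w2 : walk n) : bool :=
  has (fun p => p \in lattice_points y2 w2) (lattice_points y1 w1).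

Definition triple (n : nat) := (walk n * walk n * walk n)%type.

Section Sets.
Variables (i j n : nat).
Definition y1 : int := 0.
Definition y2 : int := (2 * i)%:Z.
Definition y3 : int := (2 * i + 2 * j)%:Z.

Definition L1 (L : triple n) : walk n := L.1.1.
Definition L2 (L : triple n) : walk n := L.1.2.
Definition L3 (L : triple n) : walk n := L.2.

Definition Uset : {set triple n} := [set: triple n].
Definition Vset : {set triple n} :=
  [set L | [&& ~~ intersect y1 y2 (L1 L) (L2 L),
              ~~ intersect y2 y3 (L2 L) (L3 L) &
              ~~ intersect y1 y3 (L1 L) (L3 L)]].
Definition M12 : {set triple n} := [set L | intersect y1 y2 (L1 L) (L2 L)].
Definition M23 : {set triple n} := [set L | intersect y2 y3 (L2 L) (L3 L)].
Definition M13 : {set triple n} := [set L | intersect y1 y3 (L1 L) (L3 L)].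
End Sets.

From mathcomp Require Import all_boot all_order all_algebra.
From mathcomp Require Import zify.
Set Implicit Arguments. Unset Strict Implicit. Unset Printing Implicit Defensive.
Import Order.TTheory GRing.Theory Num.Theory.
Local Open Scope ring_scope.

(* Walks whose starting heights differ by a positive even amount keep an even
   gap, so the lower one stays strictly below the upper one until they first
   meet.  Hence if neither L1, L2 nor L2, L3 intersect, neither do L1, L3:
   V = U \ (M12 ∪ M23), and by inclusion-exclusion it remains to show
   |M12 ∩ M23| = |M13|.  Let s and t be the first meeting times of L1, L2 and
   of L2, L3.  Exchanging the tails of the pair that meets first (nothing if
   s = t) is an involution of U; when s < t the new L2 meets L3 exactly when
   the old L1 met L3 (symmetrically when t < s), so it maps M13 onto
   M12 ∩ M23. *)

Lemma height0 y (w : seq bool) : height y w 0 = y.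
Proof. by rewrite /height take0 big_nil addr0. Qed.

Lemma heightS y (w : seq bool) k : (k < size w)%N ->
  height y w k.+1 = height y w k + step (nth false w k).
Proof.
by move=> kw; rewrite /height (take_nth false kw) -cats1 big_cat big_seq1 addrA.
Qed.

Section TwoWalks.
Variable n : nat.
Implicit Types (y z : int) (u v x : walk n).

Definition splice (s : nat) u v : walk n :=
  [tuple if (k < s)%N then tnth u k else tnth v k | k < n].

Lemma nth_splice s u v k : (k < n)%N ->
  nth false (splice s u v) k = if (k < s)%N then nth false u k else nth false v k.
Proof.
move=> kn; rewrite -[k]/(nat_of_ord (Ordinal kn)) -!tnth_nth tnth_mktuple.
by case: ifP.
Qed.

Lemma spliceK s u v : splice s (splice s u v) (splice s v u) = u.
Proof. by apply: eq_from_tnth => k; rewrite !tnth_mktuple; case: (k < s)%N. Qed.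

Lemma height_splice_le y s u v k : (k <= s)%N -> (k <= n)%N ->
  height y (splice s u v) k = height y u k.
Proof.
elim: k => [|k IH] ks kn; first by rewrite !height0.
by rewrite !heightS ?size_tuple // IH ?(ltnW ks) ?(ltnW kn) // nth_splice // ks.
Qed.

Lemma height_splice_ge y y' s u v k : (s <= k)%N -> (k <= n)%N ->
  height y u s = height y' v s -> height y (splice s u v) k = height y' v k.
Proof.
move=> sk kn eq_s; elim: k sk kn => [|k IH] sk kn.
  by move: sk eq_s; rewrite leqn0 => /eqP ->; rewrite !height0.
have [es|neq_sk] := eqVneq s k.+1; first by rewrite -es height_splice_le // es.
have sk' : (s <= k)%N by rewrite -ltnS ltn_neqAle neq_sk.
by rewrite !heightS ?size_tuple // IH ?(ltnW kn) // nth_splice // ltnNge sk'.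
Qed.

(* [n.+1] when the walks do not meet. *)
Definition first_meet y y' u v : nat :=
  find (fun k => height y u k == height y' v k) (iota 0 n.+1).

Lemma first_meet_le y y' u v : (first_meet y y' u v <= n.+1)%N.
Proof. by rewrite -[n.+1](size_iota 0) find_size. Qed.

Lemma before_first_meet_leq y y' u v k : (k < first_meet y y' u v)%N -> (k <= n)%N.
Proof. by move/leq_trans/(_ (first_meet_le y y' u v)). Qed.

Lemma first_meetC y y' u v : first_meet y y' u v = first_meet y' y v u.
Proof. by apply: eq_find => k; rewrite eq_sym. Qed.

Lemma before_first_meet y y' u v k : (k < first_meet y y' u v)%N ->
  height y u k != height y' v k.
Proof.
move=> k_lt; have := before_find 0%N k_lt; rewrite nth_iota ?add0n => [->//|].
exact: before_first_meet_leq k_lt.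
Qed.

Lemma height_first_meet y y' u v : (first_meet y y' u v <= n)%N ->
  height y u (first_meet y y' u v) = height y' v (first_meet y y' u v).
Proof.
move=> meet; have has_meet : has (fun k => height y u k == height y' v k) (iota 0 n.+1).
  by rewrite has_find size_iota.
by have /eqP := nth_find 0%N has_meet; rewrite nth_iota ?add0n.
Qed.

Lemma first_meet_eq y y' u v s : (s <= n)%N ->
  (forall k, (k < s)%N -> height y u k != height y' v k) ->
  height y u s = height y' v s -> first_meet y y' u v = s.
Proof.
move=> sn neq eq_s; case: (ltngtP (first_meet y y' u v) s) => // [lt_fs|lt_sf].
  by have := neq _ lt_fs; rewrite height_first_meet ?eqxx // ltnW ?(leq_trans lt_fs sn).
by have := before_first_meet lt_sf; rewrite eq_s eqxx.
Qed.

Lemma lt_first_meet y y' u v s : (s <= n)%N ->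
  (forall k, (k <= s)%N -> height y u k != height y' v k) ->
  (s < first_meet y y' u v)%N.
Proof.
move=> sn neq; rewrite ltnNge; apply/negP => fs.
by have := neq _ fs; rewrite height_first_meet ?eqxx // (leq_trans fs).
Qed.

Lemma intersectP y y' u v : reflect
  (exists2 k, (k <= n)%N & height y u k = height y' v k) (intersect y y' u v).
Proof.
apply: (iffP hasP) => [[_ /mapP[k k_in ->] /mapP[k' _ [ek eh]]]|[k kn eq_k]].
  by exists k; [rewrite mem_iota in k_in | rewrite eh ek].
by exists (k, height y u k); apply/mapP; exists k; rewrite ?mem_iota ?eq_k.
Qed.

Lemma intersect_first_meet y y' u v :
  intersect y y' u v = (first_meet y y' u v <= n)%N.
Proof.
apply/intersectP/idP => [[k kn eq_k]|meet]; last by exists (first_meet y y' u v);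
  rewrite ?height_first_meet.
rewrite leqNgt; apply/negP => lt_nf.
by have := before_first_meet (leq_ltn_trans kn lt_nf); rewrite eq_k eqxx.
Qed.

Lemma intersectC y y' u v : intersect y y' u v = intersect y' y v u.
Proof. by rewrite !intersect_first_meet first_meetC. Qed.

Lemma first_meet_splice y y' u v (s := first_meet y y' u v) : (s <= n)%N ->
  first_meet y y' (splice s u v) (splice s v u) = s.
Proof.
move=> sn; apply: first_meet_eq => [//|k ks|].
  have kn : (k <= n)%N := ltnW (leq_trans ks sn).
  by rewrite !height_splice_le ?(ltnW ks) //; apply: before_first_meet.
by rewrite !height_splice_le // height_first_meet.
Qed.

Lemma lt_first_meet_splice y z s u v x : (s <= n)%N ->
  (forall k, (k <= s)%N -> height y u k != height z x k) ->
  (s < first_meet y z (splice s u v) x)%N.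
Proof.
move=> sn neq; apply: lt_first_meet => // k ks.
by rewrite height_splice_le ?neq ?(leq_trans ks).
Qed.

Lemma intersect_splice y y' z s u v x : height y u s = height y' v s ->
  (forall k, (k <= s)%N -> height y u k != height z x k) ->
  (forall k, (k <= s)%N -> height y' v k != height z x k) ->
  intersect y z (splice s u v) x = intersect y' z v x.
Proof.
move=> eq_s neq_u neq_v; apply/intersectP/intersectP => -[k kn eq_k];
  case: (leqP k s) => ks.
- by have := neq_u _ ks; rewrite -(height_splice_le y u v ks kn) eq_k eqxx.
- by exists k; rewrite // -(height_splice_ge (ltnW ks) kn eq_s).
- by have := neq_v _ ks; rewrite eq_k eqxx.
- by exists k; rewrite // (height_splice_ge (ltnW ks) kn eq_s).
Qed.

End TwoWalks.

Definition even_gap (y y' : int) : Prop := exists2 m : int, 0 < m & y' - y = 2 * m.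

Lemma lt_height_before_first_meet n y y' (u v : walk n) k : even_gap y y' ->
  (k < first_meet y y' u v)%N -> height y u k < height y' v k.
Proof.
(* Each step changes the gap by 0 or 2, and it cannot drop to 0 before the meeting. *)
move=> gap; suff : (k < first_meet y y' u v)%N -> even_gap (height y u k) (height y' v k).
  by move=> gap_k /gap_k [m]; lia.
elim: k => [_|k IH lt_kf]; first by rewrite !height0.
have kn : (k < n)%N := before_first_meet_leq lt_kf.
have [m m_gt0 eq_m] := IH (ltnW lt_kf).
have := before_first_meet lt_kf; rewrite !heightS ?size_tuple //.
case: (nth false u k); case: (nth false v k) => /= neq.
- by exists m; lia.
- by exists (m - 1); lia.
- by exists (m + 1); lia.
- by exists m; lia.
Qed.

Section ThreeWalks.
Variables (n : nat) (p q r : int).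
Hypotheses (gap_pq : even_gap p q) (gap_qr : even_gap q r).

Section FirstMeets.
Variables a b c : walk n.
Let s := first_meet p q a b.
Let t := first_meet q r b c.

Lemma height13_neq k : (k <= minn s t)%N -> (k < maxn s t)%N ->
  height p a k != height r c k.
Proof.
rewrite leq_min => /andP[ks kt] lt_k_max.
have [lt_ks|le_sk] := ltnP k s; have [lt_kt|le_tk] := ltnP k t.
- have lt_pq := lt_height_before_first_meet gap_pq lt_ks.
  have lt_qr := lt_height_before_first_meet gap_qr lt_kt.
  by rewrite lt_eqF // (lt_trans lt_pq lt_qr).
- have -> : k = t by apply/eqP; rewrite eqn_leq kt le_tk.
  have tn : (t <= n)%N := leq_trans le_tk (before_first_meet_leq lt_ks).
  by rewrite -height_first_meet //; apply: before_first_meet; rewrite -/t; lia.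
- have -> : k = s by apply/eqP; rewrite eqn_leq ks le_sk.
  have sn : (s <= n)%N := leq_trans le_sk (before_first_meet_leq lt_kt).
  by rewrite height_first_meet //; apply: before_first_meet; rewrite -/s; lia.
- by move: lt_k_max; rewrite leq_max !ltnNge le_sk le_tk.
Qed.

Lemma not_intersect13 :
  ~~ intersect p q a b -> ~~ intersect q r b c -> ~~ intersect p r a c.
Proof.
move=> not12 not23; apply/negP => /intersectP[k kn eq_k].
move: not12 not23; rewrite !intersect_first_meet -!ltnNge -/s -/t => lt_ns lt_nt.
suff : height p a k != height r c k by rewrite eq_k eqxx.
by apply: height13_neq; lia.
Qed.

Lemma intersect13_same_first_meet : s = t ->
  intersect p q a b && intersect q r b c = intersect p r a c.
Proof.
move=> st; have [sn|lt_ns] := leqP s n.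
  have tn : (t <= n)%N by rewrite -st.
  have meet12 : intersect p q a b by rewrite intersect_first_meet.
  have meet23 : intersect q r b c by rewrite intersect_first_meet.
  rewrite meet12 meet23; apply/esym/intersectP; exists s => //.
  by rewrite height_first_meet // -/s st height_first_meet.
have not12 : ~~ intersect p q a b by rewrite intersect_first_meet -ltnNge.
have not23 : ~~ intersect q r b c by rewrite intersect_first_meet -ltnNge -/t -st.
by rewrite (negbTE not12) (negbTE (not_intersect13 not12 not23)).
Qed.

Section FirstPairFirst.
Hypothesis lt_st : (s < t)%N.

Let sn : (s <= n)%N := before_first_meet_leq lt_st.

Lemma lt_first_meet_swap12 : (s < first_meet q r (splice s b a) c)%N.
Proof.
apply: lt_first_meet_splice => // k ks.
exact: before_first_meet (leq_ltn_trans ks lt_st).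
Qed.

Lemma intersect_swap12 : intersect q r (splice s b a) c = intersect p r a c.
Proof.
apply: intersect_splice => [|k ks|k ks]; first by rewrite height_first_meet.
  exact: before_first_meet (leq_ltn_trans ks lt_st).
by apply: height13_neq; lia.
Qed.

End FirstPairFirst.

Section SecondPairFirst.
Hypothesis lt_ts : (t < s)%N.

Let tn : (t <= n)%N := before_first_meet_leq lt_ts.

Lemma lt_first_meet_swap23 : (t < first_meet p q a (splice t b c))%N.
Proof.
rewrite first_meetC; apply: lt_first_meet_splice => // k kt.
by rewrite eq_sym; apply: before_first_meet (leq_ltn_trans kt lt_ts).
Qed.

Lemma intersect_swap23 : intersect p q a (splice t b c) = intersect p r a c.
Proof.
rewrite intersectC [RHS]intersectC.
apply: intersect_splice => [|k kt|k kt]; first by rewrite height_first_meet.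
  by rewrite eq_sym; apply: before_first_meet (leq_ltn_trans kt lt_ts).
by rewrite eq_sym; apply: height13_neq; lia.
Qed.

End SecondPairFirst.
End FirstMeets.

Definition swap_tails (L : triple n) : triple n :=
  let: (a, b, c) := L in
  let s := first_meet p q a b in
  let t := first_meet q r b c in
  if (s < t)%N then (splice s a b, splice s b a, c)
  else if (t < s)%N then (a, splice t b c, splice t c b)
  else L.

Lemma swap_tailsK : involutive swap_tails.
Proof.
case=> [[a b] c] /=.
case: ltngtP => [lt_st|lt_ts|eq_st]; rewrite /swap_tails.
- have sn := before_first_meet_leq lt_st.
  by rewrite first_meet_splice // lt_first_meet_swap12 // !spliceK.
- have tn := before_first_meet_leq lt_ts.
  have lt_t := lt_first_meet_swap23 lt_ts.
  by rewrite first_meet_splice // (leq_gtF (ltnW lt_t)) lt_t !spliceK.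
- by rewrite eq_st ltnn.
Qed.

Lemma intersect_swap_tails L :
  intersect p q (L1 (swap_tails L)) (L2 (swap_tails L))
    && intersect q r (L2 (swap_tails L)) (L3 (swap_tails L))
  = intersect p r (L1 L) (L3 L).
Proof.
case: L => [[a b] c]; rewrite /swap_tails /L1 /L2 /L3 /=.
case: ltngtP => [lt_st|lt_ts|eq_st] /=.
- have sn := before_first_meet_leq lt_st.
  by rewrite [X in X && _]intersect_first_meet first_meet_splice // sn intersect_swap12.
- have tn := before_first_meet_leq lt_ts.
  by rewrite [X in _ && X]intersect_first_meet first_meet_splice // tn andbT intersect_swap23.
- exact: intersect13_same_first_meet.
Qed.

End ThreeWalks.

Section Counting.
Variables (i j n : nat).
Hypotheses (hi : (1 <= i)%N) (hj : (1 <= j)%N).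

Let gap12 : even_gap y1 (y2 i).
Proof. by exists i%:Z; rewrite /y1 /y2; lia. Qed.

Let gap23 : even_gap (y2 i) (y3 i j).
Proof. by exists j%:Z; rewrite /y2 /y3; lia. Qed.

Lemma Vset_eq : Vset i j n = ~: (M12 i n :|: M23 i j n).
Proof.
apply/setP => L; rewrite !inE negb_or.
have not13 := not_intersect13 gap12 gap23 (a := L1 L) (b := L2 L) (c := L3 L).
by case: (intersect y1 (y2 i) _ _) (intersect (y2 i) (y3 i j) _ _) not13
  => [] [] //= /(_ isT isT) ->.
Qed.

Lemma card_M12_M23 : #|M12 i n :&: M23 i j n| = #|M13 i j n|.
Proof.
rewrite -(card_preimset _ (inv_inj (swap_tailsK y1 (y2 i) (y3 i j)))).
by apply: eq_card => L; rewrite !inE intersect_swap_tails.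
Qed.

End Counting.

Theorem proposition3p1 (i j : nat) (hi : (1 <= i)%N) (hj : (1 <= j)%N) :
  forall n : nat,
    (#|Vset i j n|)%:Z =
      (#|Uset n|)%:Z + (#|M13 i j n|)%:Z - (#|M12 i n|)%:Z - (#|M23 i j n|)%:Z.
Proof.
move=> n.
have := cardsUI (M12 i n) (M23 i j n).
have := cardsC (M12 i n :|: M23 i j n).
rewrite -Vset_eq // card_M12_M23 // /Uset cardsT.
lia.
Qed.
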